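(* Let $U$ be an open subset of $\mathbb{R}^n$ with the Euclidean metric $d$, and let $C\subset\mathbb{R}^n$ be a metric coordinatizing set for $U$ with respect to $d$. Let $\phi:(t_1,t_2)\to U$ be a continuous curve and $t\in(t_1,t_2)$ with $\phi(t)\notin C$. Then $\phi$ is differentiable at $t$ (in the usual sense) if and only if $\phi$ is metric-coordinate-wise differentiable at $t$, i.e. for every $c\in C$ the function $s\mapsto\phi_c(s):=d(\phi(s),c)$ is differentiable at $s=t$.
   Context: A set $C\subset\mathbb{R}^n$ is a metric coordinatizing set for $U\subset\mathbb{R}^n$ if for all $x,y\in U$ with $x\neq y$ there is $c\in C$ with $d(x,c)\neq d(y,c)$. *)

From HB Require Import structures.
From mathcomp Require Import all_boot all_order all_algebra.
From mathcomp Require Import all_classical all_reals all_analysis.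
Set Implicit Arguments. Unset Strict Implicit. Unset Printing Implicit Defensive.
Import Order.TTheory GRing.Theory Num.Theory.
Import numFieldNormedType.Exports.
Local Open Scope classical_set_scope.
Local Open Scope ring_scope.

Definition euclid_dist (R : realType) (n : nat) (x y : 'rV[R]_n) : R :=
  Num.sqrt (\sum_(i < n) (x ord0 i - y ord0 i) ^+ 2).

Definition metric_coordinatizing (R : realType) (n : nat)
  (C U : set 'rV[R]_n) : Prop :=
  forall x y, U x -> U y -> x <> y ->
    exists c, C c /\ euclid_dist x c <> euclid_dist y c.

From HB Require Import structures.
From mathcomp Require Import all_boot all_order all_algebra.
From mathcomp Require Import all_classical all_reals all_analysis.
From mathcomp Require Import ring zify.
Import Order.TTheory GRing.Theory Num.Theory.
Import numFieldNormedType.Exports.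
Local Open Scope classical_set_scope.
Local Open Scope ring_scope.

(* Let [W] be the space of directions [v] such that [s |-> dot v (phi s)] is
   differentiable at [t].  By polarization, [W] contains all differences
   [c - c0] of points of [C].  A nonzero [u] orthogonal to all of them and to
   [phi t - c0] would give two points [phi t +- d u] of [U] equidistant from
   every point of [C]; hence every nonzero [u] orthogonal to [W] satisfies
   [dot u (phi t - c0) != 0], and so [W] has codimension at most one.  If [W]
   were the hyperplane orthogonal to such a [u], then [dot u (phi - c0) ^+ 2]
   would be [|u|^2] times [|phi - c0|^2] minus the squared norm of a projection
   into [W]: it is differentiable and nonzero at [t], so [dot u (phi - c0)] is
   differentiable too and [u] is in [W], which is absurd.  The converse is the
   chain rule for the square root, away from its singularity because [phi t]
   is not in [C]. *)

Section Dot.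
Context {F : fieldType} {n : nat}.
Implicit Types (u v x : 'rV[F]_n) (a : F).

Definition dot u x : F := (u *m x^T) 0 0.

Lemma dotE u x : dot u x = \sum_i u 0 i * x 0 i.
Proof. by rewrite /dot !mxE; apply: eq_bigr => i _; rewrite mxE. Qed.

Lemma dotC u x : dot u x = dot x u.
Proof. by rewrite !dotE; apply: eq_bigr => i _; rewrite mulrC. Qed.

Lemma dot0l x : dot 0 x = 0.
Proof. by rewrite /dot mul0mx mxE. Qed.

Lemma dotDl u v x : dot (u + v) x = dot u x + dot v x.
Proof. by rewrite /dot mulmxDl mxE. Qed.

Lemma dotZl a u x : dot (a *: u) x = a * dot u x.
Proof. by rewrite /dot -scalemxAl mxE. Qed.

Lemma dotNl u x : dot (- u) x = - dot u x.
Proof. by rewrite -scaleN1r dotZl mulN1r. Qed.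

Lemma dotBl u v x : dot (u - v) x = dot u x - dot v x.
Proof. by rewrite dotDl dotNl. Qed.

Lemma dotDr u v x : dot x (u + v) = dot x u + dot x v.
Proof. by rewrite dotC dotDl -!(dotC x). Qed.

Lemma dotZr a u x : dot x (a *: u) = a * dot x u.
Proof. by rewrite dotC dotZl dotC. Qed.

Lemma dotNr u x : dot x (- u) = - dot x u.
Proof. by rewrite dotC dotNl dotC. Qed.

Lemma dotBr u v x : dot x (u - v) = dot x u - dot x v.
Proof. by rewrite dotDr dotNr. Qed.

Lemma dot_delta i x : dot (delta_mx 0 i) x = x 0 i.
Proof. by rewrite /dot -rowE !mxE. Qed.

(* The vectors [delta_mx 0 i - (u 0 i / dot u u) *: u] are the projections
   of the standard basis onto the hyperplane orthogonal to [u]. *)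
Lemma dot_sqr_decomposition u y : dot u u != 0 ->
  dot u y ^+ 2 = dot u u *
    (dot y y - \sum_i dot (delta_mx 0 i - (u 0 i / dot u u) *: u) y ^+ 2).
Proof.
move=> uu0; under eq_bigr do rewrite dotBl dot_delta dotZl.
rewrite (eq_bigr (fun i => y 0 i * y 0 i
    - 2 * (dot u y / dot u u) * (u 0 i * y 0 i)
    + (dot u y / dot u u) ^+ 2 * (u 0 i * u 0 i))); last by move=> i _; ring.
rewrite big_split sumrB /= -!mulr_sumr -!dotE.
by move: (dot u y) (dot y y) (dot u u) uu0 => a b N N0; field.
Qed.

End Dot.

Section DotReal.
Context {R : realFieldType} {n : nat}.
Implicit Types (u : 'rV[R]_n).

Lemma dot_ge0 u : 0 <= dot u u.
Proof. by rewrite dotE sumr_ge0 // => i _; rewrite -expr2 sqr_ge0. Qed.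

Lemma dot_eq0 u : (dot u u == 0) = (u == 0).
Proof.
apply/idP/eqP => [|->]; last by rewrite dot0l.
rewrite dotE psumr_eq0 => [/allP u0|i _]; last by rewrite -expr2 sqr_ge0.
apply/rowP => i; rewrite mxE.
by have := u0 i (mem_index_enum i); rewrite /= -expr2 sqrf_eq0 => /eqP.
Qed.

End DotReal.

Section EuclidDist.
Context {R : realType} {n : nat}.
Implicit Types (x c : 'rV[R]_n).

Lemma euclid_distE x c : euclid_dist x c = Num.sqrt (dot (x - c) (x - c)).
Proof.
rewrite /euclid_dist dotE; congr Num.sqrt.
by apply: eq_bigr => i _; rewrite !mxE expr2.
Qed.

Lemma euclid_dist_sqr x c : euclid_dist x c ^+ 2 = dot (x - c) (x - c).
Proof. by rewrite euclid_distE sqr_sqrtr // dot_ge0. Qed.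

Lemma euclid_dist_gt0 x c : x != c -> 0 < euclid_dist x c.
Proof.
rewrite -subr_eq0 -dot_eq0 => xc0.
by rewrite euclid_distE sqrtr_gt0 lt_neqAle dot_ge0 eq_sym xc0.
Qed.

End EuclidDist.

Section Subspace.
Context {F : fieldType} {n : nat}.
Implicit Types (u v w z : 'rV[F]_n).

Lemma kermx_kermx_tr_sub {m} (M : 'M[F]_(m, n)) : (kermx (kermx M^T)^T <= M)%MS.
Proof.
have MK : (M <= kermx (kermx M^T)^T)%MS.
  by apply/sub_kermxP; rewrite -[M in M *m _]trmxK -trmx_mul mulmx_ker trmx0.
have rkK : \rank (kermx (kermx M^T)^T) = \rank M.
  by rewrite !(mxrank_ker, mxrank_tr) subKn // rank_leq_col.
by have [_] := mxrank_leqif_eq MK; rewrite rkK eqxx => /esym /andP [].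
Qed.

Lemma rank_le1_nonorthogonal {m} (K : 'M[F]_(m, n)) z :
  (forall u, (u <= K)%MS -> u != 0 -> dot u z != 0) -> (\rank K <= 1)%N.
Proof.
move=> Knz; rewrite leqNgt; apply/negP => rkK.
have rkZ : (n - 1 <= \rank (kermx z^T))%N.
  by rewrite mxrank_ker leq_sub2l // rank_leq_col.
have := mxrank_sum_cap K (kermx z^T); have := rank_leq_col (K + kermx z^T)%MS.
move=> rk_sum rk_cap; have : (0 < \rank (K :&: kermx z^T))%N by lia.
rewrite lt0n mxrank_eq0 => /rowV0Pn [u]; rewrite sub_capmx => /andP [uK /sub_kermxP uz u0].
by have := Knz u uK u0; rewrite /dot uz mxE eqxx.
Qed.

Context {P : 'rV[F]_n -> Prop}.
Hypotheses (P0 : P 0) (P_lin : forall a v w, P v -> P w -> P (a *: v + w)).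

Lemma subspace_rowspace : exists M : 'M[F]_n, forall v, P v <-> (v <= M)%MS.
Proof.
suff: forall k, exists M : 'M[F]_n, (forall v, (v <= M)%MS -> P v) /\
    ((k <= \rank M)%N \/ forall v, P v -> (v <= M)%MS).
  move=> /(_ n.+1) [M [MP [rkM|PM]]]; last by exists M; split; [apply: PM|apply: MP].
  by have := rank_leq_col M; rewrite leqNgt rkM.
elim=> [|k [M [MP [rkM|PM]]]]; last 1 first.
- by exists M; split=> //; right.
- exists 0; split; last by left.
  by move=> v; rewrite submx0 => /eqP ->.
have [PM|/existsNP [w /not_implyP [Pw wM]]] := pselect (forall v, P v -> (v <= M)%MS).
  by exists M; split=> //; right.
exists (M + w)%MS; split.
- move=> v /sub_addsmxP [[a b] /= ->].
  rewrite (mx11_scalar b) mul_scalar_mx addrC.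
  by apply: P_lin => //; apply: MP; exact: submxMl.
- left; apply: leq_ltn_trans rkM (rank_ltmx _).
  rewrite ltmxEneq addsmxSl /=; apply/negP => wMs.
  by apply: wM; exact: submx_trans (addsmxSr M w) wMs.
Qed.

Lemma subspace_codim_le1 {z} :
  (forall u, u != 0 -> (forall v, P v -> dot u v = 0) -> dot u z != 0) ->
  (forall v, P v) \/ exists2 u, u != 0 & forall v, P v <-> dot u v = 0.
Proof.
move=> nonorth; have [M PM] := subspace_rowspace.
pose K := kermx M^T.
have orthK u v : (u <= K)%MS -> P v -> dot u v = 0.
  move=> /sub_kermxP uK /PM /submxP [D ->].
  by rewrite /dot trmx_mul mulmxA uK mul0mx mxE.
have P_orthK v : v *m K^T = 0 -> P v.
  by move=> /sub_kermxP vK; apply/PM; exact: submx_trans vK (kermx_kermx_tr_sub M).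
have : (\rank K <= 1)%N.
  by apply: rank_le1_nonorthogonal => u uK u0; apply: nonorth u0 (orthK u ^~ uK).
rewrite leq_eqVlt ltnS leqn0 mxrank_eq0 => /orP [rkK1|/eqP K0]; last first.
  by left=> v; apply: P_orthK; rewrite K0 trmx0 mulmx0.
have /rowV0Pn [u uK u0] : K != 0 by rewrite -mxrank_eq0 (eqP rkK1).
right; exists u => // v; split; first by move=> Pv; exact: orthK.
move=> uv; apply: P_orthK.
have : (K <= u)%MS.
  by have [_] := mxrank_leqif_eq uK; rewrite rank_rV u0 (eqP rkK1) => /esym /andP [].
case/submxP=> D ->; rewrite trmx_mul mulmxA.
suff -> : v *m u^T = 0 by rewrite mul0mx.
by apply/matrixP => i j; rewrite !ord1 [RHS]mxE -[LHS]/(dot v u) dotC.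
Qed.

End Subspace.

(* Two points [x +- d u] close to [x] are both in [U], and their squared
   distances to [c] differ by [4 d (dot u (x - c))]. *)
Lemma coordinatizing_nonorthogonal {R : realType} {n} {U C : set 'rV[R]_n} {x u} :
  open U -> metric_coordinatizing C U -> U x -> u != 0 ->
  exists2 c, C c & dot u (x - c) != 0.
Proof.
move=> oU mc Ux u0.
have [//|no_c] := pselect (exists2 c, C c & dot u (x - c) != 0).
have orth c : C c -> dot u (x - c) = 0.
  by move=> Cc; apply/eqP; apply: contra_notT no_c => nz; exists c.
exfalso.
have [e e0 eU] : exists2 e, 0 < e & ball x e `<=` U.
  by apply/nbhs_ballP; apply: open_nbhs_nbhs.
pose d := e / (2 * `|u|).
have d0 : 0 < d by rewrite divr_gt0 // mulr_gt0 // normr_gt0.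
have du_lt : `|d *: u| < e.
  rewrite normrZ gtr0_norm // /d invfM mulrA divfK ?normr_eq0 //.
  by rewrite ltr_pdivrMr // ltr_pMr // ltr1n.
have U_plus : U (x + d *: u).
  by apply: eU; rewrite -ball_normE /ball_ /= opprD addNKr normrN.
have U_minus : U (x - d *: u).
  by apply: eU; rewrite -ball_normE /ball_ /= opprB addrC subrK.
have neq : x + d *: u <> x - d *: u.
  move/(congr1 (fun y => y - x)); rewrite !(addrC x) !addrK => /eqP.
  rewrite -addr_eq0 -scalerDl scaler_eq0 (negbTE u0) orbF.
  by rewrite -mulr2n mulrn_eq0 /= gt_eqF.
have [c [Cc]] := mc _ _ U_plus U_minus neq; case.
rewrite !euclid_distE (addrAC x (d *: u)) (addrAC x (- (d *: u))).
have := orth c Cc; move: (x - c) => w uw.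
rewrite !(dotDl, dotNl, dotDr, dotNr, dotZl, dotZr) (dotC w u) uw.
congr Num.sqrt; ring.
Qed.

Section Calculus.
Context {R : realType}.

Lemma continuous_within_itvoo_at (V : topologicalType) (f : R -> V) (a b t : R) :
  {within `]a, b[, continuous f} -> a < t < b -> {for t, continuous f}.
Proof.
move=> fc tab; have := fc t; rewrite /continuous_at -nbhs_subspace_interior //.
by rewrite interior_itv /= in_itv /= tab.
Qed.

Lemma derivable_sqrt (g : R -> R) t : derivable g t 1 -> 0 < g t ->
  derivable (fun s => Num.sqrt (g s)) t 1.
Proof.
move=> /derivableP dg g0.
exact: (@ex_derive _ _ _ _ _ _ _ (is_derive1_comp (is_derive1_sqrt g0) dg)).
Qed.

(* Near [t], [h] has the sign of [h t], so [h = sg (h t) * sqrt (h ^+ 2)]. *)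
Lemma derivable_of_sqr (h : R -> R) t : {for t, continuous h} -> h t != 0 ->
  derivable (fun s => h s ^+ 2) t 1 -> derivable h t 1.
Proof.
wlog h_gt0 : h / 0 < h t.
  move=> gen hc h0 dh; have [h_lt0|h_gt0|] := ltgtP (h t) 0; last by move/eqP: h0.
    have dNh : derivable (fun s => - h s) t 1.
      apply: gen; rewrite ?oppr_gt0 ?oppr_eq0 //; first exact: continuousN.
      by under eq_fun do rewrite sqrrN.
    have -> : h = (fun s => - - h s) by apply: funext => s; rewrite opprK.
    exact: derivableN dNh.
  exact: gen.
move=> hc _ dh.
apply: (@near_eq_derivable _ _ _ (fun s => Num.sqrt (h s ^+ 2))); last first.
  by apply: derivable_sqrt; rewrite ?exprn_gt0.
near=> s; rewrite sqrtr_sqr gtr0_norm //.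
by near: s; exact: cvgr_gt _ hc _ h_gt0.
Unshelve. all: by end_near. Qed.

Lemma mx_entry_norm_le {m n} (x : 'M[R]_(m, n)) i j : `|x i j| <= `|x|.
Proof.
rewrite [leRHS]/Num.Def.normr /= mx_normrE.
by apply: le_trans; last exact: (le_bigmax _ _ (i, j)).
Qed.

Lemma continuous_dot n (f : R -> 'rV[R]_n) t u :
  {for t, continuous f} -> {for t, continuous (fun s => dot u (f s))}.
Proof.
move=> fc; have entry_cont i : {for t, continuous (fun s => f s 0 i)}.
  apply/cvgrPdist_lt => e e0; near=> s.
  have := mx_entry_norm_le (f t - f s) 0 i; rewrite !mxE => /le_lt_trans; apply.
  by near: s; exact: (cvgrPdist_lt _ _).1 fc e e0.
under [X in {for t, continuous X}]eq_fun do rewrite dotE.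
apply: cvg_big => //; first exact: add_continuous.
by move=> i _; apply: cvgM; [exact: cvg_cst | exact: entry_cont].
Unshelve. all: by end_near. Qed.

End Calculus.

Section MetricCoordinates.
Context {R : realType} {n : nat} {U C : set 'rV[R]_n} {phi : R -> 'rV[R]_n} {t : R}.
Hypotheses (oU : open U) (mc : metric_coordinatizing C U) (U_phit : U (phi t))
  (phi_cont : {for t, continuous phi})
  (dist_derivable : forall c, C c -> derivable (fun s => euclid_dist (phi s) c) t 1).

Let derivable_along v := derivable (fun s => dot v (phi s)) t 1.

Let derivable_along0 : derivable_along 0.
Proof. by rewrite /derivable_along; under eq_fun do rewrite dot0l; exact: derivable_cst. Qed.

Let derivable_along_lin a v w :
  derivable_along v -> derivable_along w -> derivable_along (a *: v + w).
Proof.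
move=> dv dw; rewrite /derivable_along; under eq_fun do rewrite dotDl dotZl.
apply: derivableD; last exact: dw.
by apply: derivableM; [exact: derivable_cst | exact: dv].
Qed.

Lemma sqr_dist_derivable c : C c ->
  derivable (fun s => dot (phi s - c) (phi s - c)) t 1.
Proof.
move=> Cc; under eq_fun do rewrite -euclid_dist_sqr expr2.
by apply: derivableM; exact: dist_derivable.
Qed.

(* Polarization: [2 dot (c - c0) x = |x - c0|^2 - |x - c|^2 + |c|^2 - |c0|^2]. *)
Lemma derivable_along_sub {c c0} : C c -> C c0 -> derivable_along (c - c0).
Proof.
move=> Cc Cc0; rewrite /derivable_along.
have polar x : dot (c - c0) x = (dot (x - c0) (x - c0) - dot (x - c) (x - c)
    + (dot c c - dot c0 c0)) / 2.
  by rewrite !(dotBl, dotBr) (dotC c x) (dotC c0 x); field.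
under eq_fun do rewrite polar.
apply: derivableM; last exact: derivable_cst.
apply: derivableD; last exact: derivable_cst.
by apply: derivableB; exact: sqr_dist_derivable.
Qed.

Lemma derivable_along_normal {c0 u} : C c0 -> u != 0 ->
  dot u (phi t - c0) != 0 -> (forall v, dot u v = 0 -> derivable_along v) ->
  derivable_along u.
Proof.
move=> Cc0 u0 uz orth_derivable.
have uu0 : dot u u != 0 by rewrite dot_eq0.
suff dh : derivable (fun s => dot u (phi s - c0)) t 1.
  rewrite /derivable_along.
  have -> : (fun s => dot u (phi s)) = (fun s => dot u (phi s - c0) + dot u c0).
    by apply: funext => s; rewrite -dotDr subrK.
  by apply: derivableD => //; exact: derivable_cst.
apply: derivable_of_sqr => //.
  apply: continuous_dot; apply: cvgB; [exact: phi_cont | exact: cvg_cst].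
under eq_fun do rewrite dot_sqr_decomposition //.
apply: derivableM; first exact: derivable_cst.
apply: derivableB; first exact: sqr_dist_derivable.
rewrite -fct_sumE; apply: derivable_sum => i.
set w := 'e_i - _ *: u.
have dw : derivable (fun s => dot w (phi s - c0)) t 1.
  under eq_fun do rewrite dotBr.
  apply: derivableB; last exact: derivable_cst.
  by apply: orth_derivable; rewrite dotBr dotZr dotC dot_delta divfK // subrr.
by under eq_fun do rewrite expr2; exact: (derivableM dw dw).
Qed.

Lemma derivable_along_all v : derivable_along v.
Proof.
have [[c0 Cc0]|noC] := pselect (exists c, C c); last first.
  have [->|v0] := eqVneq v 0; first exact: derivable_along0.
  have [c Cc _] := coordinatizing_nonorthogonal oU mc U_phit v0.
  by case: noC; exists c.
have nonorth u : u != 0 -> (forall w, derivable_along w -> dot u w = 0) ->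
    dot u (phi t - c0) != 0.
  move=> u0 orth; apply/eqP => uz.
  have [c Cc] := coordinatizing_nonorthogonal oU mc U_phit u0; apply/negP/negPn/eqP.
  have -> : phi t - c = (phi t - c0) - (c - c0) by rewrite opprB addrA subrK.
  by rewrite dotBr uz (orth _ (derivable_along_sub Cc Cc0)) subrr.
have [//|[u u0 Pu]] := subspace_codim_le1 derivable_along0 derivable_along_lin nonorth.
have u_orth w : derivable_along w -> dot u w = 0 by move/Pu.
have : derivable_along u.
  by apply: (derivable_along_normal Cc0 u0 (nonorth u u0 u_orth)) => w /Pu.
by move/u_orth/eqP; rewrite dot_eq0 (negbTE u0).
Qed.

Lemma derivable_of_coordinatizing : derivable phi t 1.
Proof.
apply/derivable_mxP => i j; rewrite (ord1 i).
have := derivable_along_all (delta_mx 0 j).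
by rewrite /derivable_along; under eq_fun do rewrite dot_delta.
Qed.

End MetricCoordinates.

Lemma derivable_euclid_dist {R : realType} {n} (phi : R -> 'rV[R]_n) t c :
  derivable phi t 1 -> phi t != c -> derivable (fun s => euclid_dist (phi s) c) t 1.
Proof.
move=> dphi phic; rewrite /euclid_dist.
apply: derivable_sqrt; last by rewrite -sqrtr_gt0; exact: euclid_dist_gt0.
rewrite -fct_sumE; apply: derivable_sum => i.
have di : derivable (fun s => phi s 0 i - c 0 i) t 1.
  by apply: derivableB; [move/derivable_mxP: dphi; apply | exact: derivable_cst].
by under eq_fun do rewrite expr2; exact: (derivableM di di).
Qed.

Theorem theorem4p1 (R : realType) (n : nat) (U C : set 'rV[R]_n)
  (t1 t2 : R) (phi : R -> 'rV[R]_n) (t : R) :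
  open U ->
  metric_coordinatizing C U ->
  (forall s, t1 < s < t2 -> U (phi s)) ->
  {within `]t1, t2[, continuous phi} ->
  t1 < t < t2 ->
  ~ C (phi t) ->
  (derivable phi t 1 <->
   forall c, C c -> derivable (fun s => euclid_dist (phi s) c) t 1).
Proof.
move=> oU mc U_phi phi_cont t_in phit_notin_C; split=> [dphi c Cc|dist_derivable].
  apply: derivable_euclid_dist dphi _.
  by apply: contra_notN phit_notin_C => /eqP ->.
apply: derivable_of_coordinatizing oU mc (U_phi t t_in) _ dist_derivable.
exact: continuous_within_itvoo_at phi_cont t_in.
Qed.
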